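(* Let $X=\{\ell,r,s\}$ be a te-set such that $\{\ell,r\}$ is a tu-set and $|\operatorname{supp}(z)|\geq2$ for all $z\in X$. Let $j\in\operatorname{supp}(r)\cap\operatorname{supp}(\ell)$, and let $r',s'$ be the rows of $X/(\ell,j)$ corresponding to $r$ and $s$ (where $(\ell,j)$ denotes the pivot at the row $\ell$ and column $j$). If $\operatorname{supp}(r')=\operatorname{supp}(s')$, then either $\{r,s\}$ or $\{\ell,r,s\}$ is a te-lace.
   Context: A set of vectors is identified with the matrix whose rows are these vectors; $\operatorname{supp}(x)$ is the set of nonzero coordinates of $x$. A matrix is totally equimodular if every set of linearly independent rows forms a matrix of full row rank whose nonzero maximal minors all have the same absolute value, and totally unimodular if all its square submatrices have determinant in $\{0,\pm1\}$. A linearly independent set of $\{0,\pm1\}$-vectors is a te-set if its matrix is totally equimodular, a tu-set if its matrix is totally unimodular, and a te-lace if it is a te-set, not a tu-set, and all its proper subsets are tu-sets. For a position $(i,j)$ with $A_i^j\neq0$, $A/(i,j)$ is obtained from $A$ by dividing row $i$ by $A_i^j$ and adding suitable multiples of this row to the other rows so that column $j$ becomes the $i$-th unit vector. *)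

From mathcomp Require Import all_boot all_order all_algebra.
Set Implicit Arguments. Unset Strict Implicit. Unset Printing Implicit Defensive.
Import Order.TTheory GRing.Theory Num.Theory.
Local Open Scope ring_scope.

(* Vectors are rows over the field rat; a finite set of vectors is identified
   with the matrix whose rows are these vectors. *)

Definition pm01 (m n : nat) (A : 'M[rat]_(m, n)) : Prop :=
  forall i j, A i j = 0 \/ A i j = 1 \/ A i j = -1.

Definition totally_unimodular (m n : nat) (A : 'M[rat]_(m, n)) : Prop :=
  forall (k : nat) (f : 'I_k -> 'I_m) (g : 'I_k -> 'I_n),
    let d := \det (mxsub f g A) in d = 0 \/ d = 1 \/ d = -1.

Definition totally_equimodular (m n : nat) (A : 'M[rat]_(m, n)) : Prop :=
  forall (k : nat) (f : 'I_k -> 'I_m), injective f ->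
    row_free (rowsub f A) ->
    forall g1 g2 : 'I_k -> 'I_n,
      \det (colsub g1 (rowsub f A)) != 0 ->
      \det (colsub g2 (rowsub f A)) != 0 ->
      `|\det (colsub g1 (rowsub f A))| = `|\det (colsub g2 (rowsub f A))|.

Definition te_set (m n : nat) (A : 'M[rat]_(m, n)) : Prop :=
  row_free A /\ pm01 A /\ totally_equimodular A.

Definition tu_set (m n : nat) (A : 'M[rat]_(m, n)) : Prop :=
  row_free A /\ pm01 A /\ totally_unimodular A.

Definition te_lace (m n : nat) (A : 'M[rat]_(m, n)) : Prop :=
  te_set A /\ ~ tu_set A /\
  (forall (k : nat) (f : 'I_k -> 'I_m), injective f -> (k < m)%N ->
     tu_set (rowsub f A)).

Definition supp (n : nat) (x : 'rV[rat]_n) : {set 'I_n} :=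
  [set j | x 0 j != 0].

(* pivoting A/(i,j): divide row i by A i j, then subtract multiples of it
   from the other rows so that column j becomes the i-th unit vector *)
Definition pivot (m n : nat) (A : 'M[rat]_(m, n)) (i : 'I_m) (j : 'I_n)
  : 'M[rat]_(m, n) :=
  \matrix_(k, c) (if k == i then A i c / A i j
                  else A k c - A k j * (A i c / A i j)).

Definition mx2 (n : nat) (a b : 'rV[rat]_n) : 'M[rat]_(2, n) :=
  \matrix_(i < 2) (if i == 0 then a else b).

Definition mx3 (n : nat) (a b c : 'rV[rat]_n) : 'M[rat]_(3, n) :=
  \matrix_(i < 3) (if val i == 0%N then a else if val i == 1%N then b else c).

From mathcomp Require Import all_boot all_order all_algebra.
From mathcomp Require Import ring.
Import Order.TTheory GRing.Theory Num.Theory.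
Local Open Scope ring_scope.
Set Implicit Arguments. Unset Strict Implicit.

(* If {r, s} violates total unimodularity, it is a te-lace: it is a te-set as
   a subset of X, and single {0, +-1}-rows are tu. Otherwise every 2x2 minor of
   {l, r} and of {r, s} lies in {0, +-1}. Column by column, the pivot condition
   supp r' = supp s' and the total equimodularity of {l, s} are then
   constraints on a few entries in {0, +-1}. A case analysis on them shows that
   either s is a linear combination of l and r, contradicting the independence
   of X, or s_j = 0, every 2x2 minor of {l, s} lies in {0, +-1}, and there are
   columns a, b with l_a <> 0 = r_a and l_b = 0 <> r_b on which the 3x3 minor
   of X at columns j, b, a is +-2. Then X is not tu while all its proper
   subsets are, so X is a te-lace. *)

Definition pm01s : seq rat := [:: 0; 1; -1].

Lemma pm01sP (x : rat) : x = 0 \/ x = 1 \/ x = -1 <-> x \in pm01s.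
Proof.
rewrite !inE; split; first by case=> [->|[->|->]]; rewrite eqxx ?orbT.
by case/or3P=> /eqP->; auto.
Qed.

Lemma pm01P m n (A : 'M[rat]_(m, n)) : pm01 A <-> forall i j, A i j \in pm01s.
Proof. by split=> h i j; apply/pm01sP. Qed.

Definition minor2 {R : pzRingType} (a b c d : R) : R := a * d - b * c.

Lemma minor2_swap {R : comPzRingType} (a b c d : R) :
  minor2 c d a b = minor2 b a d c.
Proof. by rewrite /minor2 mulrC [d * a]mulrC. Qed.

Lemma ord_eq_Ordinal n (i : 'I_n) k (lt_kn : (k < n)%N) : val i = k -> i = Ordinal lt_kn.
Proof. by move=> e; apply/val_inj. Qed.

(* Turns ordinals such as [lift 0 0] into literal [Ordinal]s, so that [ring]
   identifies equal matrix entries. *)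
Ltac concrete_ordinals :=
  repeat match goal with
  | |- context [@fun_of_matrix ?R ?m ?n ?A ?i ?j] =>
    lazymatch i with
    | Ordinal _ => lazymatch j with
      | Ordinal _ => fail
      | _ => let v := eval vm_compute in (nat_of_ord j) in
             rewrite (@ord_eq_Ordinal n j v isT erefl) end
    | _ => let v := eval vm_compute in (nat_of_ord i) in
           rewrite (@ord_eq_Ordinal m i v isT erefl) end
  end.

Lemma det_mx22 {R : comNzRingType} (A : 'M[R]_2) :
  \det A = minor2 (A 0 0) (A 0 1) (A 1 0) (A 1 1).
Proof.
rewrite (expand_det_row _ 0) !big_ord_recl big_ord0 /cofactor !det_mx11 !mxE /=.
by concrete_ordinals; rewrite /minor2 /= expr0 expr1; ring.
Qed.

Lemma det_mx33 {R : comNzRingType} (A : 'M[R]_3) :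
  \det A = A 0 0 * minor2 (A 1 1) (A 1 2) (A 2 1) (A 2 2)
         - A 0 1 * minor2 (A 1 0) (A 1 2) (A 2 0) (A 2 2)
         + A 0 2 * minor2 (A 1 0) (A 1 1) (A 2 0) (A 2 1).
Proof.
rewrite (expand_det_row _ 0) !big_ord_recl big_ord0 /cofactor !det_mx22 !mxE /=.
by concrete_ordinals; rewrite /minor2 /= !exprS expr0; ring.
Qed.

Lemma tnth_pair_inj m (i1 i2 : 'I_m) : i1 != i2 -> injective (tnth [tuple i1; i2]).
Proof.
move=> ne [[|[|x]] ?] [[|[|y]] ?] //; rewrite !(tnth_nth i1) /= => e;
  by [apply: val_inj | move: ne; rewrite e eqxx].
Qed.

Lemma row_free_rowsub m n k (A : 'M[rat]_(m, n)) (f : 'I_k -> 'I_m) :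
  injective f -> row_free A -> row_free (rowsub f A).
Proof.
move=> f_inj rfA; apply/inj_row_free => v.
rewrite rowsubE mulmxA -(mul0mx 1 A) => /(row_free_inj rfA) v0.
apply/rowP => t; have := congr1 (fun w : 'rV_m => w 0 (f t)) v0.
rewrite !mxE (bigD1 t) //= big1 ?addr0; first by rewrite !mxE eqxx mulr1.
by move=> i ne; rewrite !mxE (inj_eq f_inj) (negbTE ne) mulr0.
Qed.

Lemma te_set_rowsub m n k (A : 'M[rat]_(m, n)) (f : 'I_k -> 'I_m) :
  injective f -> te_set A -> te_set (rowsub f A).
Proof.
move=> f_inj [rfA [pmA teA]]; split; first exact: row_free_rowsub.
split; first by move=> i c; rewrite mxE.
move=> k' f' f'_inj rf' g1 g2; rewrite -rowsub_comp.
by apply: teA; [exact: inj_comp | rewrite rowsub_comp].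
Qed.

Definition minors2_pm01 m n (A : 'M[rat]_(m, n)) : Prop :=
  forall i1 i2 c d, i1 != i2 -> minor2 (A i1 c) (A i1 d) (A i2 c) (A i2 d) \in pm01s.

Lemma minors2_pm01_lt m n (A : 'M[rat]_(m, n)) :
  (forall (i1 i2 : 'I_m) c d, (i1 < i2)%N ->
     minor2 (A i1 c) (A i1 d) (A i2 c) (A i2 d) \in pm01s) ->
  minors2_pm01 A.
Proof.
move=> h i1 i2 c d; rewrite neq_ltn => /orP[/h // | lt21].
by rewrite minor2_swap; apply: h.
Qed.

Lemma minors2_rowsub m n k (A : 'M[rat]_(m, n)) (f : 'I_k -> 'I_m) :
  injective f -> minors2_pm01 A -> minors2_pm01 (rowsub f A).
Proof. by move=> f_inj h i1 i2 c d ne; rewrite !mxE; apply: h; rewrite (inj_eq f_inj). Qed.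

Lemma minors2_pm01_le1 k n (A : 'M[rat]_(k, n)) : (k <= 1)%N -> minors2_pm01 A.
Proof.
move=> k1 i1 i2 c d; suff -> : i1 = i2 by rewrite eqxx.
apply: ord_inj; move: (leq_trans (ltn_ord i1) k1) (leq_trans (ltn_ord i2) k1).
by rewrite !ltnS !leqn0 => /eqP-> /eqP->.
Qed.

Lemma tu_minors2 m n (A : 'M[rat]_(m, n)) : totally_unimodular A -> minors2_pm01 A.
Proof.
move=> tuA i1 i2 c d ne; apply/pm01sP.
by have := tuA 2 (tnth [tuple i1; i2]) (tnth [tuple c; d]); rewrite /= det_mx22 !mxE.
Qed.

Lemma tu_of_minors2 m n (A : 'M[rat]_(m, n)) :
  (m <= 2)%N -> pm01 A -> minors2_pm01 A -> totally_unimodular A.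
Proof.
move=> m2 pmA minA k f g /=.
have [f_inj|/injectivePn[i1 [i2 ne f12]]] := boolP (injectiveb f); last first.
  by left; apply: (determinant_alternate ne) => c; rewrite !mxE f12.
have := leq_card f (injectiveP _ f_inj); rewrite !card_ord => km.
case: k f g f_inj km => [|[|[|k]]] f g f_inj km.
- by rewrite det_mx00; auto.
- by rewrite det_mx11 mxE; apply: pmA.
- apply/pm01sP; rewrite det_mx22 !mxE; apply: minA.
  by rewrite (inj_eq (injectiveP _ f_inj)).
- by move: (leq_trans km m2).
Qed.

Lemma te_minor2_norm m n (A : 'M[rat]_(m, n)) (i1 i2 : 'I_m) c d c' d' :
  te_set A -> i1 != i2 ->
  minor2 (A i1 c) (A i1 d) (A i2 c) (A i2 d) != 0 ->
  minor2 (A i1 c') (A i1 d') (A i2 c') (A i2 d') != 0 ->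
  `|minor2 (A i1 c) (A i1 d) (A i2 c) (A i2 d)|
    = `|minor2 (A i1 c') (A i1 d') (A i2 c') (A i2 d')|.
Proof.
move=> [rfA [_ teA]] /tnth_pair_inj f_inj.
have := teA 2 _ f_inj (row_free_rowsub f_inj rfA) (tnth [tuple c; d]) (tnth [tuple c'; d']).
by rewrite !det_mx22 !mxE.
Qed.

Lemma te_lace_of_minors2 m n (A : 'M[rat]_(m, n)) : (m <= 3)%N ->
  te_set A -> ~ totally_unimodular A ->
  (forall k (f : 'I_k -> 'I_m), injective f -> (k < m)%N -> minors2_pm01 (rowsub f A)) ->
  te_lace A.
Proof.
move=> m3 teA ntuA minA; split=> //; split=> [[_ [_ /ntuA]] // | k f f_inj km].
have [rfA [pmA _]] := te_set_rowsub f_inj teA.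
do 2 split=> //; apply: tu_of_minors2 => //; last exact: minA.
by rewrite -ltnS (leq_trans km).
Qed.

Lemma mx2_rowsub_mx3 n (l r s : 'rV[rat]_n) :
  mx2 r s = rowsub (tnth [tuple 1; 2]) (mx3 l r s).
Proof. by apply/matrixP => -[[|[|?]] ?] c; rewrite !mxE. Qed.

Lemma mx3_notin_span n (l r s : 'rV[rat]_n) a b :
  row_free (mx3 l r s) -> exists c, s 0 c != a * l 0 c + b * r 0 c.
Proof.
move=> rf; case: (pickP (fun c => s 0 c != a * l 0 c + b * r 0 c)) => [c | s_comb].
  by exists c.
have : \row_(i < 3) [:: a; b; -1]`_i *m mx3 l r s = 0 *m mx3 l r s.
  apply/rowP => c; rewrite mul0mx !mxE !big_ord_recl big_ord0 !mxE /=.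
  by move/negbFE/eqP: (s_comb c) => ->; ring.
by move/(row_free_inj rf)/rowP/(_ 2); rewrite !mxE /= => /eqP; rewrite oppr_eq0 oner_eq0.
Qed.

Lemma mx2_te_lace n (l r s : 'rV[rat]_n) c d :
  te_set (mx3 l r s) -> minor2 (r 0 c) (r 0 d) (s 0 c) (s 0 d) \notin pm01s ->
  te_lace (mx2 r s).
Proof.
move=> X_te rs_cd; apply: te_lace_of_minors2 => // [|| k f _ k2].
- by rewrite (mx2_rowsub_mx3 l); apply: te_set_rowsub X_te; apply: tnth_pair_inj.
- by move=> /tu_minors2/(_ 0 1 c d isT); rewrite !mxE /= (negbTE rs_cd).
- by apply: minors2_pm01_le1; rewrite -ltnS.
Qed.

(* Column c lies in supp r' iff it lies in supp s', where r', s' are the rows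
   of X/(l,j), written in terms of the entries of l, r, s in columns j and c. *)
Definition same_pivot_support (lj rj sj lc rc sc : rat) : bool :=
  (rc - rj * (lc / lj) != 0) == (sc - sj * (lc / lj) != 0).

(* The lemmas below only involve finitely many entries in {0, +-1}; each is
   turned into a boolean over all their values and checked by computation. *)
Ltac decide_pm01 :=
  intros;
  repeat match goal with
  | H : is_true ?b |- _ =>
      tryif (match b with ?x \in pm01s => is_var x end) then fail
      else (move: H; apply/implyP)
  end;
  repeat match goal with
  | hx : is_true (?x \in pm01s) |- _ => move: x hx; apply/allP
  end;
  by vm_compute.

Lemma norm_minor2_ls_eq2 (lj rj sj ld rd sd : rat) :
  lj \in pm01s -> rj \in pm01s -> sj \in pm01s ->
  ld \in pm01s -> rd \in pm01s -> sd \in pm01s ->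
  lj != 0 -> rj != 0 -> sj != 0 ->
  minor2 lj ld rj rd \in pm01s -> minor2 rj rd sj sd \in pm01s ->
  same_pivot_support lj rj sj ld rd sd -> sd != sj * rj * rd ->
  `|minor2 lj ld sj sd| == 2.
Proof. decide_pm01. Qed.

Lemma s_entry_of_norm_minor2_neq1 (lj rj sj le re se : rat) :
  lj \in pm01s -> rj \in pm01s -> sj \in pm01s ->
  le \in pm01s -> re \in pm01s -> se \in pm01s ->
  lj != 0 -> rj != 0 -> sj != 0 ->
  minor2 lj le rj re \in pm01s -> same_pivot_support lj rj sj le re se ->
  `|minor2 lj le sj se| != 1 ->
  se == 2 * sj * rj * re - sj * lj * le.
Proof. decide_pm01. Qed.

Lemma minor2_notin_pm01s (lj lc ld sc sd : rat) :
  lj \in pm01s -> lc \in pm01s -> ld \in pm01s -> sc \in pm01s -> sd \in pm01s ->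
  lj != 0 -> minor2 lc ld sc sd \notin pm01s ->
  (`|minor2 lc ld sc sd| == 2) && (`|minor2 lj lc 0 sc| == 1).
Proof. decide_pm01. Qed.

Lemma s_entry_of_supp_l_sub_r (lj rj lb rb sb lc rc sc : rat) :
  lj \in pm01s -> rj \in pm01s -> lb \in pm01s -> rb \in pm01s -> sb \in pm01s ->
  lc \in pm01s -> rc \in pm01s -> sc \in pm01s ->
  lj != 0 -> rj != 0 -> sb != 0 ->
  minor2 lj lb rj rb \in pm01s -> minor2 lj lc rj rc \in pm01s ->
  minor2 rb rc sb sc \in pm01s ->
  same_pivot_support lj rj 0 lb rb sb -> same_pivot_support lj rj 0 lc rc sc ->
  ~~ ((lb != 0) && (rb == 0)) -> ~~ ((lc != 0) && (rc == 0)) ->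
  sc == sb * rb * rc - sb * rb * (rj * lj) * lc.
Proof. decide_pm01. Qed.

Lemma s_entry_of_supp_r_sub_l (lj rj la ra sa lc rc sc : rat) :
  lj \in pm01s -> rj \in pm01s -> la \in pm01s -> ra \in pm01s -> sa \in pm01s ->
  lc \in pm01s -> rc \in pm01s -> sc \in pm01s ->
  lj != 0 -> rj != 0 -> sa != 0 ->
  minor2 lj la rj ra \in pm01s -> minor2 lj lc rj rc \in pm01s ->
  minor2 la lc sa sc \in pm01s ->
  same_pivot_support lj rj 0 la ra sa -> same_pivot_support lj rj 0 lc rc sc ->
  ~~ ((la == 0) && (ra != 0)) -> ~~ ((lc == 0) && (rc != 0)) ->
  sc == sa * la * lc - sa * la * (rj * lj) * rc.
Proof. decide_pm01. Qed.

Lemma s_entry_of_det3_pm01 (lj rj la sa rb sb lc rc sc : rat) :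
  lj \in pm01s -> rj \in pm01s -> la \in pm01s -> sa \in pm01s -> rb \in pm01s ->
  sb \in pm01s -> lc \in pm01s -> rc \in pm01s -> sc \in pm01s ->
  lj != 0 -> rj != 0 -> la != 0 -> rb != 0 ->
  same_pivot_support lj rj 0 la 0 sa -> same_pivot_support lj rj 0 0 rb sb ->
  lj * rb * sa + la * rj * sb \in pm01s ->
  minor2 lj lc rj rc \in pm01s -> same_pivot_support lj rj 0 lc rc sc ->
  minor2 rb rc sb sc \in pm01s -> minor2 la lc sa sc \in pm01s ->
  sc == sb * rb * rc - sb * rb * (rj * lj) * lc.
Proof. decide_pm01. Qed.

Section PivotedRows.

Variables (n : nat) (l r s : 'rV[rat]_n) (j : 'I_n).
Hypothesis X_te : te_set (mx3 l r s).
Hypothesis lr_tu : tu_set (mx2 l r).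
Hypothesis j_supp : j \in supp r :&: supp l.
Hypothesis pivot_supp :
  supp (row (@Ordinal 3 1 isT) (pivot (mx3 l r s) (@Ordinal 3 0 isT) j))
    = supp (row (@Ordinal 3 2 isT) (pivot (mx3 l r s) (@Ordinal 3 0 isT) j)).
Hypothesis rs_minor : forall c d, minor2 (r 0 c) (r 0 d) (s 0 c) (s 0 d) \in pm01s.

Lemma l_pm01 c : l 0 c \in pm01s.
Proof. by have := (pm01P _).1 X_te.2.1 0 c; rewrite mxE. Qed.

Lemma r_pm01 c : r 0 c \in pm01s.
Proof. by have := (pm01P _).1 X_te.2.1 1 c; rewrite mxE. Qed.

Lemma s_pm01 c : s 0 c \in pm01s.
Proof. by have := (pm01P _).1 X_te.2.1 2 c; rewrite mxE. Qed.

Lemma lr_minor c d : minor2 (l 0 c) (l 0 d) (r 0 c) (r 0 d) \in pm01s.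
Proof. by have := tu_minors2 lr_tu.2.2 (i1 := 0) (i2 := 1) c d isT; rewrite !mxE. Qed.

Lemma lj_neq0 : l 0 j != 0.
Proof. by move: j_supp; rewrite !inE => /andP[]. Qed.

Lemma rj_neq0 : r 0 j != 0.
Proof. by move: j_supp; rewrite !inE => /andP[]. Qed.

Lemma pivot_supp_at c :
  same_pivot_support (l 0 j) (r 0 j) (s 0 j) (l 0 c) (r 0 c) (s 0 c).
Proof.
have := congr1 (fun A : {set 'I_n} => c \in A) pivot_supp.
by rewrite /same_pivot_support !inE !mxE /= => ->.
Qed.

Lemma s_neq0 : exists b, s 0 b != 0.
Proof. by have [b] := mx3_notin_span 0 0 X_te.1; rewrite !mul0r addr0; exists b. Qed.

Lemma ls_minor_norm c d c' d' :
  `|minor2 (l 0 c) (l 0 d) (s 0 c) (s 0 d)| == 2 ->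
  `|minor2 (l 0 c') (l 0 d') (s 0 c') (s 0 d')| != 1.
Proof.
move=> /eqP ls2; apply/eqP => ls1.
have := @te_minor2_norm _ _ _ 0 2 c d c' d' X_te isT; rewrite !mxE /=.
rewrite -[minor2 (l 0 c) _ _ _ == 0]normr_eq0 -[minor2 (l 0 c') _ _ _ == 0]normr_eq0.
by rewrite ls2 ls1 => /(_ isT isT).
Qed.

#[local] Hint Resolve l_pm01 r_pm01 s_pm01 lr_minor rs_minor : core.
#[local] Hint Resolve lj_neq0 rj_neq0 pivot_supp_at : core.

Lemma s_j_eq0 : s 0 j = 0.
Proof.
apply/eqP; apply: contraT => sj_neq0.
case: (pickP (fun d => s 0 d != s 0 j * r 0 j * r 0 d)) => [d sd_neq | s_prop_r]; last first.
  have [c /negP[]] := mx3_notin_span 0 (s 0 j * r 0 j) X_te.1.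
  by move/negbFE/eqP: (s_prop_r c) => ->; apply/eqP; ring.
have ls_jd : `|minor2 (l 0 j) (l 0 d) (s 0 j) (s 0 d)| == 2.
  exact: (norm_minor2_ls_eq2 (rj := r 0 j) (rd := r 0 d)).
have [c /negP[]] := mx3_notin_span (- (s 0 j * l 0 j)) (2 * s 0 j * r 0 j) X_te.1.
have /eqP -> : s 0 c == 2 * s 0 j * r 0 j * r 0 c - s 0 j * l 0 j * l 0 c.
  by apply: s_entry_of_norm_minor2_neq1 => //; apply: ls_minor_norm ls_jd.
by apply/eqP; ring.
Qed.

Lemma pivot_supp_s_j0 c :
  same_pivot_support (l 0 j) (r 0 j) 0 (l 0 c) (r 0 c) (s 0 c).
Proof. by rewrite -s_j_eq0. Qed.

#[local] Hint Resolve pivot_supp_s_j0 : core.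

Lemma ls_minor c d : minor2 (l 0 c) (l 0 d) (s 0 c) (s 0 d) \in pm01s.
Proof.
apply: contraT => ls_cd.
have /andP[ls_cd2 ls_jc1] :
    (`|minor2 (l 0 c) (l 0 d) (s 0 c) (s 0 d)| == 2)
    && (`|minor2 (l 0 j) (l 0 c) 0 (s 0 c)| == 1).
  exact: minor2_notin_pm01s.
by rewrite -s_j_eq0 (negbTE (ls_minor_norm j c ls_cd2)) in ls_jc1.
Qed.

#[local] Hint Resolve ls_minor : core.

Lemma exists_col_l_not_r : exists2 a, l 0 a != 0 & r 0 a = 0.
Proof.
case: (pickP (fun a => (l 0 a != 0) && (r 0 a == 0))) => [a /andP[la /eqP ra] | l_sub_r].
  by exists a.
have [b sb] := s_neq0.
have [c /negP[]] :=
  mx3_notin_span (- (s 0 b * r 0 b) * (r 0 j * l 0 j)) (s 0 b * r 0 b) X_te.1.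
have /eqP -> :
    s 0 c == s 0 b * r 0 b * r 0 c - s 0 b * r 0 b * (r 0 j * l 0 j) * l 0 c.
  by apply: (s_entry_of_supp_l_sub_r (lb := l 0 b)) => //; apply/negbT/l_sub_r.
by apply/eqP; ring.
Qed.

Lemma exists_col_r_not_l : exists2 b, l 0 b = 0 & r 0 b != 0.
Proof.
case: (pickP (fun b => (l 0 b == 0) && (r 0 b != 0))) => [b /andP[/eqP lb rb] | r_sub_l].
  by exists b.
have [a sa] := s_neq0.
have [c /negP[]] :=
  mx3_notin_span (s 0 a * l 0 a) (- (s 0 a * l 0 a) * (r 0 j * l 0 j)) X_te.1.
have /eqP -> :
    s 0 c == s 0 a * l 0 a * l 0 c - s 0 a * l 0 a * (r 0 j * l 0 j) * r 0 c.
  by apply: (s_entry_of_supp_r_sub_l (ra := r 0 a)) => //; apply/negbT/r_sub_l.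
by apply/eqP; ring.
Qed.

Lemma mx3_not_tu : ~ totally_unimodular (mx3 l r s).
Proof.
have [a la ra] := exists_col_l_not_r; have [b lb rb] := exists_col_r_not_l.
move=> /(_ 3 (tnth [tuple 0; 1; 2]) (tnth [tuple j; b; a])) /pm01sP.
rewrite det_mx33 !mxE !(tnth_nth j) /= ra lb s_j_eq0 => det_pm01.
have D_pm01 : l 0 j * r 0 b * s 0 a + l 0 a * r 0 j * s 0 b \in pm01s.
  by apply: etrans _ det_pm01; congr (in_mem _ _); rewrite /minor2; ring.
have piv_a := pivot_supp_s_j0 a; have piv_b := pivot_supp_s_j0 b.
rewrite ra in piv_a; rewrite lb in piv_b.
have [c /negP[]] :=
  mx3_notin_span (- (s 0 b * r 0 b) * (r 0 j * l 0 j)) (s 0 b * r 0 b) X_te.1.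
have /eqP -> :
    s 0 c == s 0 b * r 0 b * r 0 c - s 0 b * r 0 b * (r 0 j * l 0 j) * l 0 c.
  exact: (s_entry_of_det3_pm01 (la := l 0 a) (sa := s 0 a)).
by apply/eqP; ring.
Qed.

Lemma mx3_te_lace : te_lace (mx3 l r s).
Proof.
apply: te_lace_of_minors2 => // [|k f f_inj _]; first exact: mx3_not_tu.
apply: minors2_rowsub => //; apply: minors2_pm01_lt.
by move=> [[|[|[|?]]] ?] [[|[|[|?]]] ?] c d //= _; rewrite !mxE.
Qed.

End PivotedRows.

Theorem mainTheorem8 (n : nat) (l r s : 'rV[rat]_n) (j : 'I_n) :
  te_set (mx3 l r s) ->
  tu_set (mx2 l r) ->
  (2 <= #|supp l|)%N -> (2 <= #|supp r|)%N -> (2 <= #|supp s|)%N ->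
  j \in supp r :&: supp l ->
  supp (row (@Ordinal 3 1 isT) (pivot (mx3 l r s) (@Ordinal 3 0 isT) j))
    = supp (row (@Ordinal 3 2 isT) (pivot (mx3 l r s) (@Ordinal 3 0 isT) j)) ->
  te_lace (mx2 r s) \/ te_lace (mx3 l r s).
Proof.
move=> X_te lr_tu _ _ _ j_supp pivot_supp.
have [rs01 | /forallPn[c /forallPn[d /= rs_cd]]] :=
  boolP [forall c, forall d, minor2 (r 0 c) (r 0 d) (s 0 c) (s 0 d) \in pm01s].
  right; apply: mx3_te_lace X_te lr_tu j_supp pivot_supp _ => c d.
  by move/forallP/(_ d): (forallP rs01 c).
by left; apply: mx2_te_lace X_te rs_cd.
Qed.
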